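(* For every integer $n$ with $1\le n\le N$, every integer $j\ge 0$ and all $x,y$ with $x-y\notin\{0,1,\dots,j\}$, $$\mathscr K_{n-1}^{(0,j)}(x,y)=\mathscr A_n^{(j)}(x,y)\,K_n(x)+\mathscr B_n^{(j)}(x,y)\,K_{n-1}(x),$$ where $$\mathscr A_n^{(j)}(x,y)=\frac{j!}{\|K_{n-1}\|^2\,[x-y]_{j+1}}\sum_{k=0}^{j}\frac{\Delta^kK_{n-1}(y)}{k!}[x-y]_k,\qquad \mathscr B_n^{(j)}(x,y)=-\frac{j!}{\|K_{n-1}\|^2\,[x-y]_{j+1}}\sum_{k=0}^{j}\frac{\Delta^kK_{n}(y)}{k!}[x-y]_k .$$
   Context: Fix an integer $N\ge 1$ and $0<p<1$. Notation: $(a)_0=1$, $(a)_k=a(a+1)\cdots(a+k-1)$ (Pochhammer symbol); $[z]_0=1$, $[z]_k=z(z-1)\cdots(z-k+1)$ (falling factorial). For a function $f$, $\Delta f(x)=f(x+1)-f(x)$, $\nabla f(x)=f(x)-f(x-1)$, $\Delta^0$ is the identity and $\Delta^k=\Delta\circ\Delta^{k-1}$; $\Delta_x,\Delta_y$ denote $\Delta$ acting in the indicated variable. For $0\le n\le N$ the monic Kravchuk polynomial is $K_n(x)=p^n(-N)_n\sum_{k=0}^{n}\frac{(-n)_k(-x)_k}{(-N)_k\,k!}p^{-k}$, and $K_{-1}=0$; these are monic of degree $n$ and orthogonal on $\{0,\dots,N\}$ with respect to the binomial weight $w(x)=\binom{N}{x}p^x(1-p)^{N-x}$, with $\|K_n\|^2=\sum_{x=0}^N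 K_n(x)^2w(x)=n!(-N)_np^n(p-1)^n$. For $1\le n\le N+1$ and integers $i,l\ge0$, the differenced reproducing kernel is $\mathscr K_{n-1}^{(i,l)}(x,y)=\sum_{k=0}^{n-1}\frac{\Delta^iK_k(x)\,\Delta^lK_k(y)}{\|K_k\|^2}$ (i.e. $\Delta_x^i\Delta_y^l$ applied to $\sum_{k=0}^{n-1}K_k(x)K_k(y)/\|K_k\|^2$). *)

From HB Require Import structures.
From mathcomp Require Import all_boot all_order all_algebra.
Set Implicit Arguments. Unset Strict Implicit. Unset Printing Implicit Defensive.
Import Order.TTheory GRing.Theory Num.Theory.
Local Open Scope ring_scope.

Section Kravchuk.
Variable R : realFieldType.

Definition poch (a : R) (k : nat) : R := \prod_(i < k) (a + i%:R).
Definition falling (z : R) (k : nat) : R := \prod_(i < k) (z - i%:R).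

Definition Delta (f : R -> R) : R -> R := fun x => f (x + 1) - f x.
Definition DeltaN (k : nat) (f : R -> R) : R -> R := iter k Delta f.

(* monic Kravchuk polynomial K_n(x) (parameters N, p) *)
Definition Krav (N : nat) (p : R) (n : nat) (x : R) : R :=
  p ^+ n * poch (- N%:R) n *
  \sum_(k < n.+1) (poch (- n%:R) k * poch (- x) k /
                   (poch (- N%:R) k * k`!%:R) * p ^- k).

Definition wbin (N : nat) (p : R) (x : nat) : R :=
  'C(N, x)%:R * p ^+ x * (1 - p) ^+ (N - x).

Definition Knorm2 (N : nat) (p : R) (n : nat) : R :=
  \sum_(x < N.+1) Krav N p n x%:R ^+ 2 * wbin N p x.

(* differenced reproducing kernel  K_{n-1}^{(i,l)}(x,y) *)
Definition Kker (N : nat) (p : R) (n i l : nat) (x y : R) : R :=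
  \sum_(k < n) DeltaN i (Krav N p k) x * DeltaN l (Krav N p k) y
               / Knorm2 N p k.

Definition Acoef (N : nat) (p : R) (n j : nat) (x y : R) : R :=
  j`!%:R / (Knorm2 N p n.-1 * falling (x - y) j.+1) *
  \sum_(k < j.+1) (DeltaN k (Krav N p n.-1) y / k`!%:R * falling (x - y) k).

Definition Bcoef (N : nat) (p : R) (n j : nat) (x y : R) : R :=
  - (j`!%:R / (Knorm2 N p n.-1 * falling (x - y) j.+1)) *
  \sum_(k < j.+1) (DeltaN k (Krav N p n) y / k`!%:R * falling (x - y) k).

End Kravchuk.

From HB Require Import structures.
From mathcomp Require Import all_boot all_order all_algebra.
From mathcomp Require Import ring zify.
Set Implicit Arguments. Unset Strict Implicit. Unset Printing Implicit Defensive.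
Import Order.TTheory GRing.Theory Num.Theory.
Local Open Scope ring_scope.

(* Since Delta_y^j commutes with the finite sum defining the kernel,
     K^(0,j)_(n-1)(x,y) = Delta_t^j [ sum_(k<n) K_k(x) K_k(t) / ||K_k||^2 ] (y).
   Delta^j at y only sees t = y, ..., y+j, where x - t <> 0, and there the
   Christoffel-Darboux formula writes the bracket as g(t) / (x - t) with
   g = (K_n(x) K_(n-1) - K_(n-1)(x) K_n) / ||K_(n-1)||^2.  A discrete Leibniz
   rule, Delta^j [g(t)/(x-t)] (y) = j!/[x-y]_(j+1) sum_(k<=j) Delta^k g(y)/k! [x-y]_k,
   and linearity in g then give the stated coefficients A and B. *)

Section Factorials.
Variable R : realFieldType.

Lemma natr_fact_neq0 (k : nat) : (k`!%:R : R) != 0.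
Proof. by rewrite pnatr_eq0 -lt0n fact_gt0. Qed.

Lemma poch0 (a : R) : poch a 0 = 1.
Proof. by rewrite /poch big_ord0. Qed.

Lemma pochS (a : R) k : poch a k.+1 = poch a k * (a + k%:R).
Proof. by rewrite /poch big_ord_recr. Qed.

Lemma pochSl (a : R) k : poch a k.+1 = a * poch (a + 1) k.
Proof.
rewrite /poch big_ord_recl /= addr0; congr (_ * _); apply: eq_bigr => i _.
by rewrite /bump /= -nat1r addrA.
Qed.

Lemma poch_negn (m k : nat) : poch (- m%:R : R) k = (-1) ^+ k * (m ^_ k)%:R.
Proof.
elim: k => [|k IH]; first by rewrite poch0 ffactn0 expr0 mulr1.
rewrite pochS IH ffactnSr exprS natrM.
have [le_km | lt_mk] := leqP k m; first by rewrite (natrB _ le_km); ring.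
have -> : m ^_ k = 0%N by apply/eqP; rewrite -leqn0 leqNgt ffact_gt0 -ltnNge.
by rewrite mulr0n !(mulr0, mul0r).
Qed.

Lemma poch_negn_neq0 (m k : nat) : (k <= m)%N -> poch (- m%:R : R) k != 0.
Proof.
move=> le_km; rewrite poch_negn mulf_eq0 negb_or signr_eq0 pnatr_eq0 -lt0n.
by rewrite ffact_gt0.
Qed.

Lemma falling0 (z : R) : falling z 0 = 1.
Proof. by rewrite /falling big_ord0. Qed.

Lemma fallingS (z : R) k : falling z k.+1 = falling z k * (z - k%:R).
Proof. by rewrite /falling big_ord_recr. Qed.

Lemma fallingSl (z : R) k : falling z k.+1 = z * falling (z - 1) k.
Proof.
rewrite /falling big_ord_recl /= subr0; congr (_ * _); apply: eq_bigr => i _.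
by rewrite /bump /= -nat1r opprD addrA.
Qed.

Lemma falling_neq0 (z : R) k :
  (forall m, (m < k)%N -> z != m%:R) -> falling z k != 0.
Proof.
by move=> z_nat; apply/prodf_neq0 => i _; rewrite subr_eq0 z_nat.
Qed.

Lemma poch_opp (x : R) k : poch (- x) k = (-1) ^+ k * falling x k.
Proof.
elim: k => [|k IH]; first by rewrite poch0 /falling big_ord0 mulr1.
by rewrite pochS IH /falling big_ord_recr exprS /=; ring.
Qed.
End Factorials.

Section FiniteDifferences.
Variable R : realFieldType.
Implicit Types (f g : R -> R) (x y : R).

Lemma DeltaN0 f y : DeltaN 0 f y = f y.
Proof. by []. Qed.

Lemma DeltaNS f k y : DeltaN k.+1 f y = DeltaN k f (y + 1) - DeltaN k f y.
Proof. by []. Qed.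

Lemma DeltaN_local f g j y :
  (forall i, (i <= j)%N -> f (y + i%:R) = g (y + i%:R)) ->
  DeltaN j f y = DeltaN j g y.
Proof.
elim: j y => [|j IH] y fg; first by rewrite !DeltaN0 -(addr0 y) (fg 0%N).
rewrite !DeltaNS (IH y) ?(IH (y + 1)) // => i le_ij.
- by rewrite -addrA nat1r fg.
- exact: fg (leqW le_ij).
Qed.

Lemma DeltaN_sum (I : finType) (c : I -> R) (F : I -> R -> R) j y :
  DeltaN j (fun t => \sum_i c i * F i t) y = \sum_i c i * DeltaN j (F i) y.
Proof.
elim: j y => [|j IH] y //.
by rewrite DeltaNS !IH -sumrB; apply: eq_bigr => i _; rewrite DeltaNS; ring.
Qed.

Lemma DeltaN_comb (a b : R) f g j y :
  DeltaN j (fun t => a * f t + b * g t) y = a * DeltaN j f y + b * DeltaN j g y.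
Proof. by elim: j y => [|j IH] y //; rewrite DeltaNS !IH !DeltaNS; ring. Qed.

Definition newton g x y j : R :=
  \sum_(k < j.+1) (DeltaN k g y / k`!%:R * falling (x - y) k).

Lemma newton_comb (a b : R) f g x y j :
  newton (fun t => a * f t + b * g t) x y j = a * newton f x y j + b * newton g x y j.
Proof.
rewrite /newton !mulr_sumr -big_split; apply: eq_bigr => k _ /=.
by rewrite DeltaN_comb; ring.
Qed.

Lemma newton_step g x y j :
  (x - y) * newton g x (y + 1) j - (x - y - j.+1%:R) * newton g x y j =
  j.+1%:R * newton g x y j.+1.
Proof.
set z := x - y; set c := fun k => DeltaN k g y / k`!%:R * falling z k.
have shift : z * newton g x (y + 1) j =
    \sum_(k < j.+1) (k.+1%:R * c k.+1) + \sum_(k < j.+1) (c k * (z - k%:R)).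
  rewrite mulr_sumr -big_split /=; apply: eq_bigr => k _.
  rewrite /c -[_ * falling z k * _]mulrA -fallingS fallingSl factS natrM DeltaNS.
  have -> : x - (y + 1) = z - 1 by rewrite /z opprD addrA.
  by field; rewrite natr_fact_neq0 nat1r pnatr_eq0.
have low : \sum_(k < j.+1) (k.+1%:R * c k.+1) = \sum_(k < j.+2) (k%:R * c k).
  by rewrite [RHS]big_ord_recl mul0r add0r.
have high : \sum_(k < j.+1) (c k * (z - k%:R)) - (z - j.+1%:R) * newton g x y j =
    \sum_(k < j.+2) ((j.+1%:R - k%:R) * c k).
  rewrite [RHS]big_ord_recr /= subrr mul0r addr0 mulr_sumr -sumrB.
  by apply: eq_bigr => k _; rewrite /c; ring.
rewrite shift -addrA high low -big_split /= /newton mulr_sumr.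
by apply: eq_bigr => k _; rewrite /c -/z; ring.
Qed.

Lemma DeltaN_div g x j y : (forall m, (m <= j)%N -> x - y != m%:R) ->
  DeltaN j (fun t => g t / (x - t)) y =
  j`!%:R / falling (x - y) j.+1 * newton g x y j.
Proof.
elim: j y => [|j IH] y xy_nat.
  rewrite DeltaN0 /newton big_ord1 DeltaN0 /= fallingS !falling0 fact0 subr0.
  by rewrite !mul1r divr1 mulr1 mulrC.
have xy1_nat m : (m <= j)%N -> x - (y + 1) != m%:R.
  by move=> le_mj; rewrite opprD addrA subr_eq natr1 xy_nat.
rewrite DeltaNS IH // IH; last by move=> m le_mj; exact: xy_nat (leqW le_mj).
have -> : x - (y + 1) = x - y - 1 by rewrite opprD addrA.
set z := x - y.
have z_neq0 : z != 0 := xy_nat 0%N isT.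
have zj_neq0 : z - j.+1%:R != 0 by rewrite subr_eq0 xy_nat.
have F_neq0 : falling z j.+2 != 0 by apply: falling_neq0 => m lt_mj; exact: xy_nat.
have -> : falling (z - 1) j.+1 = falling z j.+2 / z.
  by rewrite [falling z _]fallingSl mulrC mulKf.
have -> : falling z j.+1 = falling z j.+2 / (z - j.+1%:R).
  by rewrite [falling z j.+2]fallingS mulfK.
have -> : newton g x y j.+1 =
    (z * newton g x (y + 1) j - (z - j.+1%:R) * newton g x y j) / j.+1%:R.
  by rewrite newton_step mulrC mulKf // pnatr_eq0.
rewrite factS natrM.
by field; rewrite nat1r zj_neq0 F_neq0 z_neq0 pnatr_eq0.
Qed.
End FiniteDifferences.

Lemma size_sub_monic (R : nzRingType) (s p : {poly R}) m :
  (size s <= m.+1)%N -> p \is monic -> size p = m.+1 ->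
  (size (s - s`_m *: p)%R <= m)%N.
Proof.
move=> size_s /monicP lead_p size_p; apply/leq_sizeP => i le_mi.
rewrite coefB coefZ; case: (ltngtP m i) le_mi => [lt_mi | // | <-] _.
  have s_i : s`_i = 0 by rewrite nth_default // (leq_trans size_s).
  have p_i : p`_i = 0 by rewrite nth_default // size_p.
  by rewrite s_i p_i mulr0 subrr.
by move: lead_p; rewrite lead_coefE size_p /= => ->; rewrite mulr1 subrr.
Qed.

Section DiscreteOrthogonalPolynomials.
Variables (R : realFieldType) (N : nat) (w : nat -> R).
Hypothesis w_pos : forall x, (x <= N)%N -> 0 < w x.
Implicit Types f g h q s u v : {poly R}.

Definition ip (f g : {poly R}) : R :=
  \sum_(x < N.+1) w x * (f.[x%:R] * g.[x%:R]).

Lemma ipC f g : ip f g = ip g f.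
Proof. by apply: eq_bigr => x _; rewrite [f.[_] * _]mulrC. Qed.

Lemma ipD f g h : ip f (g + h) = ip f g + ip f h.
Proof. by rewrite /ip -big_split /=; apply: eq_bigr => x _; rewrite hornerD; ring. Qed.

Lemma ipB f g h : ip f (g - h) = ip f g - ip f h.
Proof. by rewrite /ip -sumrB /=; apply: eq_bigr => x _; rewrite hornerD hornerN; ring. Qed.

Lemma ipZ f (c : R) g : ip f (c *: g) = c * ip f g.
Proof. by rewrite /ip mulr_sumr; apply: eq_bigr => x _; rewrite hornerZ; ring. Qed.

Lemma ip0 f : ip f 0 = 0.
Proof. by rewrite /ip big1 // => x _; rewrite horner0 !mulr0. Qed.

Lemma ipX f g : ip ('X * f) g = ip f ('X * g).
Proof. by apply: eq_bigr => x _; rewrite !hornerM !hornerX; ring. Qed.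

Lemma ip_term_ge0 q (x : 'I_N.+1) : 0 <= w x * (q.[x%:R] * q.[x%:R]).
Proof. by rewrite -expr2 mulr_ge0 ?sqr_ge0 // ltW // w_pos // -ltnS. Qed.

Lemma poly_vanish_eq0 q : (size q <= N.+1)%N ->
  (forall x, (x <= N)%N -> q.[x%:R] = 0) -> q = 0.
Proof.
move=> size_q q0; apply/eqP/negPn/negP => nz_q.
have := max_poly_roots (rs := [seq x%:R | x <- iota 0 N.+1]) nz_q.
rewrite size_map size_iota map_inj_uniq ?iota_uniq; last first.
  by move=> a b /eqP; rewrite eqr_nat => /eqP.
have -> : all (root q) [seq x%:R | x <- iota 0 N.+1].
  by apply/allP => t /mapP [x]; rewrite mem_iota add0n ltnS => le_xN ->; rewrite /root q0.
by move=> /(_ isT isT); rewrite ltnNge size_q.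
Qed.

Lemma ip_eq0 q : (size q <= N.+1)%N -> ip q q = 0 -> q = 0.
Proof.
move=> size_q qq0; apply: poly_vanish_eq0 => // x le_xN.
have := @psumr_eq0P _ _ _ _ (fun i _ => ip_term_ge0 q i) qq0
  (Ordinal (le_xN : (x < N.+1)%N)) isT.
by move/eqP; rewrite mulf_eq0 gt_eqF ?w_pos //= mulf_eq0 orbb => /eqP.
Qed.

Variable P : nat -> {poly R}.
Hypothesis P_size : forall k, (k <= N)%N -> size (P k) = k.+1.
Hypothesis P_monic : forall k, (k <= N)%N -> P k \is monic.
Hypothesis P_ortho : forall i k, (i <= N)%N -> (k <= N)%N -> i != k -> ip (P i) (P k) = 0.

Definition norm2 k := ip (P k) (P k).

Lemma norm2_neq0 k : (k <= N)%N -> norm2 k != 0.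
Proof.
move=> le_kN; apply: contra (monic_neq0 (P_monic le_kN)) => /eqP nk0.
by apply/eqP/ip_eq0; rewrite ?P_size.
Qed.

Lemma P_coef k : (k <= N)%N -> (P k)`_k = 1.
Proof. by move=> le_kN; have /monicP := P_monic le_kN; rewrite lead_coefE P_size. Qed.

(* A polynomial orthogonal to P 0, ..., P (m-1) is orthogonal to every polynomial of
   degree < m: the P i form a triangular basis. *)
Lemma ip_span q m : (m <= N.+1)%N -> (forall i, (i < m)%N -> ip q (P i) = 0) ->
  forall s, (size s <= m)%N -> ip q s = 0.
Proof.
elim: m => [|m IH] le_mN qP s size_s.
  by move/size_poly_leq0P: size_s => ->; rewrite ip0.
have le_mN' : (m <= N)%N by rewrite -ltnS.
rewrite -(subrK (s`_m *: P m) s) ipD ipZ qP // mulr0 addr0.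
apply: IH => [|i lt_im|]; first exact: ltnW.
  by rewrite qP // ltnW.
exact: size_sub_monic (P_monic le_mN') (P_size le_mN').
Qed.

Lemma P_ortho_low k s : (k <= N)%N -> (size s <= k)%N -> ip (P k) s = 0.
Proof.
move=> le_kN; apply: ip_span => [|i lt_ik]; first exact: leqW.
by rewrite P_ortho // ?neq_ltn ?lt_ik ?orbT // ltnW // (leq_trans lt_ik).
Qed.

Lemma ortho_eq0 q m : (m <= N)%N -> (size q <= m.+1)%N ->
  (forall i, (i <= m)%N -> ip (P i) q = 0) -> q = 0.
Proof.
move=> le_mN size_q qP; apply: ip_eq0; first exact: leq_trans size_q _.
by apply: (ip_span (m := m.+1)) => // i lt_im; rewrite ipC qP.
Qed.

Lemma size_XP k : (k <= N)%N -> size ('X * P k) = k.+2.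
Proof. by move=> le_kN; rewrite mulrC size_mulX ?monic_neq0 ?P_monic ?P_size. Qed.

(* X P_k and P_(k+1) are both monic of degree k + 1, so their difference
   has degree at most k. *)
Lemma size_XP_sub k : (k < N)%N -> (size ('X * P k - P k.+1)%R <= k.+1)%N.
Proof.
move=> lt_kN; have le_kN := ltnW lt_kN.
have lead_XP : ('X * P k)`_k.+1 = 1.
  have /monicP : 'X * P k \is monic by rewrite monicMr ?P_monic ?monicX.
  by rewrite lead_coefE size_XP.
rewrite -[P k.+1]scale1r -lead_XP.
by apply: size_sub_monic; rewrite ?P_monic ?P_size ?size_XP.
Qed.

(* <X P_k, P_(k+1)> = ||P_(k+1)||^2, since X P_k - P_(k+1) has degree <= k. *)
Lemma ip_XP_next k : (k < N)%N -> ip ('X * P k) (P k.+1) = norm2 k.+1.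
Proof.
move=> lt_kN; rewrite ipC -(subrK (P k.+1) ('X * P k)) ipD.
by rewrite P_ortho_low ?add0r ?size_XP_sub.
Qed.

Definition beta k := ip ('X * P k) (P k) / norm2 k.
Definition gamma k := if k is k'.+1 then norm2 k / norm2 k' else 0.

(* Three-term recurrence: X P_k - P_(k+1) - beta_k P_k - gamma_k P_(k-1) has degree
   at most k and is orthogonal to P_0, ..., P_k, hence vanishes. *)
Lemma three_term k : (k < N)%N ->
  'X * P k = P k.+1 + beta k *: P k + gamma k *: P k.-1.
Proof.
move=> lt_kN; have le_kN := ltnW lt_kN; apply: subr0_eq.
have le_k1N : (k.-1 <= N)%N by rewrite (leq_trans (leq_pred k)).
have sizeD u v : (size u <= k.+1)%N -> (size v <= k.+1)%N -> (size (u + v)%R <= k.+1)%N.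
  by move=> su sv; rewrite (leq_trans (size_polyD _ _)) // geq_max su.
have sizeZ c u : (size u <= k.+1)%N -> (size (c *: u)%R <= k.+1)%N.
  exact: leq_trans (size_scale_leq _ _).
apply: (ortho_eq0 le_kN).
  rewrite -addrA opprD addrA sizeD ?size_XP_sub // size_polyN.
  by rewrite sizeD ?sizeZ ?P_size // ltnS leq_pred.
move=> i le_ik; have le_iN := leq_trans le_ik le_kN.
rewrite ipB !ipD !ipZ [ip (P i) ('X * _)]ipC ipX ipC.
case: (ltngtP i.+1 k) => [lt_i1k | lt_ki1 | eq_i1k].
- rewrite ipC P_ortho_low ?size_XP // !P_ortho ?mulr0 ?addr0 ?subrr //; lia.
- have -> : i = k by lia.
  have gamma0 : gamma k * ip (P k) (P k.-1) = 0.
    case: k {le_ik lt_ki1 sizeD sizeZ} lt_kN le_kN le_k1N => [|k] * /=.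
      by rewrite mul0r.
    by rewrite P_ortho ?mulr0 //; lia.
  rewrite gamma0 (@P_ortho k k.+1) //; last by lia.
  by rewrite /beta -/(norm2 k) divfK ?norm2_neq0 // add0r addr0 subrr.
- subst k; rewrite (ip_XP_next (ltnW lt_kN)).
  rewrite (@P_ortho i i.+2) ?(@P_ortho i i.+1) //; try lia.
  by rewrite -/(norm2 i) divfK ?norm2_neq0 // mulr0 !add0r subrr.
Qed.

Lemma three_term_eval k t : (k < N)%N ->
  (P k.+1).[t] = t * (P k).[t] - beta k * (P k).[t] - gamma k * (P k.-1).[t].
Proof.
move=> lt_kN; have := congr1 (horner^~ t) (three_term lt_kN).
by rewrite /= !hornerE => ->; ring.
Qed.

Lemma P0 : P 0 = 1.
Proof. by rewrite [P 0]size1_polyC ?P_size // P_coef. Qed.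

Lemma christoffel_darboux n x y : (n < N)%N ->
  (x - y) * \sum_(k < n.+1) (P k).[x] * (P k).[y] / norm2 k =
  ((P n.+1).[x] * (P n).[y] - (P n).[x] * (P n.+1).[y]) / norm2 n.
Proof.
elim: n => [|n IH] lt_nN.
  by rewrite big_ord1 !(three_term_eval _ lt_nN) /= P0 -polyC1 hornerC; ring.
rewrite big_ord_recr /= mulrDr IH 1?ltnW // !(three_term_eval _ lt_nN) /=.
have := norm2_neq0 (ltnW lt_nN); have := norm2_neq0 (ltnW (ltnW lt_nN)).
move: (norm2 n) (norm2 n.+1) => hn hn1 hn_neq0 hn1_neq0.
by field; rewrite hn_neq0 hn1_neq0.
Qed.

End DiscreteOrthogonalPolynomials.

Section KravchukPolynomials.
Variables (R : realFieldType) (N : nat) (p : R).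
Hypotheses (p_gt0 : 0 < p) (p_lt1 : p < 1).

Let p_neq0 : p != 0. Proof. by rewrite gt_eqF. Qed.

Definition fallingP k : {poly R} := \prod_(0 <= i < k) ('X - (i%:R)%:P).

Lemma fallingP_horner k x : (fallingP k).[x] = falling x k.
Proof.
by rewrite horner_prod big_mkord; apply: eq_bigr => i _; rewrite hornerXsubC.
Qed.

Lemma size_fallingP k : size (fallingP k) = k.+1.
Proof. by rewrite size_prod_XsubC size_iota subn0. Qed.

Definition kcoef n k : R :=
  p ^+ n * poch (- N%:R) n * (poch (- n%:R) k / (poch (- N%:R) k * k`!%:R) * p ^- k).

Lemma Krav_sum n x : Krav N p n x = \sum_(k < n.+1) kcoef n k * poch (- x) k.
Proof. by rewrite /Krav mulr_sumr; apply: eq_bigr => k _; rewrite /kcoef; ring. Qed.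

Lemma kcoef_top n : (n <= N)%N -> kcoef n n = (-1) ^+ n.
Proof.
move=> le_nN; rewrite /kcoef (poch_negn R n n) ffactnn.
have := poch_negn_neq0 R le_nN; have := natr_fact_neq0 R n.
have : p ^+ n != 0 by rewrite expf_neq0.
move: (poch (- N%:R) n) (n`!%:R : R) (p ^+ n) => a b c c_neq0 b_neq0 a_neq0.
by field; rewrite a_neq0 b_neq0 c_neq0.
Qed.

Definition kravP n : {poly R} := \sum_(k < n.+1) (kcoef n k * (-1) ^+ k) *: fallingP k.

Lemma kravP_horner n x : (kravP n).[x] = Krav N p n x.
Proof.
rewrite Krav_sum horner_sum; apply: eq_bigr => k _.
by rewrite hornerZ fallingP_horner poch_opp mulrA.
Qed.

Lemma size_kravP_monic n : (n <= N)%N -> size (kravP n) = n.+1 /\ kravP n \is monic.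
Proof.
move=> le_nN; rewrite /kravP big_ord_recr /= kcoef_top // -exprMn mulrNN mulr1.
rewrite expr1n scale1r.
have size_low : (size (\sum_(k < n) (kcoef n k * (-1) ^+ k) *: fallingP k)%R <= n)%N.
  apply: (big_ind (fun q : {poly R} => size q <= n)%N) => [|u v su sv|k _].
  - by rewrite size_poly0.
  - by rewrite (leq_trans (size_polyD _ _)) // geq_max su.
  - by rewrite (leq_trans (size_scale_leq _ _)) // size_fallingP.
have fallingP_monic : fallingP n \is monic by exact: monic_prod_XsubC.
rewrite addrC size_polyDl ?size_fallingP //; split=> //.
by apply/monicP; rewrite lead_coefDl ?size_fallingP //; apply/monicP.
Qed.

(* The second-order difference operator having the K_n as eigenfunctions:
   L f(x) = p (N - x) Delta f(x) - (1 - p) x nabla f(x). *)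
Definition Lop (f : R -> R) (x : R) : R :=
  p * (N%:R - x) * (f (x + 1) - f x) - x * (1 - p) * (f x - f (x - 1)).

Lemma Lop_ext (f g : R -> R) x : (forall t, f t = g t) -> Lop f x = Lop g x.
Proof. by move=> fg; rewrite /Lop !fg. Qed.

Lemma Lop_sum (I : finType) (c : I -> R) (F : I -> R -> R) x :
  Lop (fun t => \sum_i c i * F i t) x = \sum_i c i * Lop (F i) x.
Proof.
have sumB t u : \sum_i c i * F i t - \sum_i c i * F i u = \sum_i c i * (F i t - F i u).
  by rewrite -sumrB; apply: eq_bigr => i _; ring.
by rewrite /Lop !sumB !mulr_sumr -sumrB; apply: eq_bigr => i _; ring.
Qed.

Lemma Lop_poch x k : Lop (fun t => poch (- t) k.+1) x =
  - k.+1%:R * poch (- x) k.+1 - p * k.+1%:R * (N%:R - k%:R) * poch (- x) k.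
Proof.
have fwd : poch (- (x + 1)) k.+1 - poch (- x) k.+1 = - k.+1%:R * poch (- x) k.
  rewrite pochSl pochS (_ : - (x + 1) + 1 = - x); last by ring.
  by rewrite -nat1r; ring.
have bwd : x * (poch (- x) k.+1 - poch (- (x - 1)) k.+1) = k.+1%:R * poch (- x) k.+1.
  rewrite [in LHS]pochSl pochS [in RHS]pochSl (_ : - (x - 1) = - x + 1); last by ring.
  by rewrite -nat1r; ring.
have shift : (N%:R - x) * poch (- x) k = poch (- x) k.+1 + (N%:R - k%:R) * poch (- x) k.
  by rewrite pochS; ring.
rewrite /Lop; transitivity (- p * k.+1%:R * ((N%:R - x) * poch (- x) k)
    - (1 - p) * (x * (poch (- x) k.+1 - poch (- (x - 1)) k.+1))).
  by rewrite fwd; ring.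
by rewrite bwd shift; ring.
Qed.

(* The coefficients of K_n satisfy the two-term recursion that makes L K_n = -n K_n. *)
Lemma kcoef_step n k : (k <= n)%N -> (n <= N)%N ->
  (n%:R - k%:R) * kcoef n k = p * k.+1%:R * (N%:R - k%:R) * kcoef n k.+1.
Proof.
move=> le_kn le_nN; have [lt_kN | le_Nk] := ltnP k N; last first.
  have [-> ->] : k = n /\ k = N by lia.
  by rewrite !subrr !mulr0 !mul0r.
rewrite /kcoef !pochS factS natrM exprS.
have := poch_negn_neq0 R (ltnW lt_kN); have := natr_fact_neq0 R k.
have : p ^+ k != 0 by rewrite expf_neq0.
have : - N%:R + k%:R != 0 :> R by rewrite addrC subr_eq0 eqr_nat neq_ltn lt_kN.
have : k.+1%:R != 0 :> R by rewrite pnatr_eq0.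
move: (poch (- N%:R) k) (k`!%:R : R) (p ^+ k) (poch (- n%:R) k) (p ^+ n * poch (- N%:R) n).
move=> a b c d e k1_neq0 Nk_neq0 c_neq0 b_neq0 a_neq0.
by field; rewrite a_neq0 b_neq0 c_neq0 Nk_neq0 p_neq0 nat1r k1_neq0.
Qed.

Lemma Krav_eigen n x : (n <= N)%N -> Lop (Krav N p n) x = - n%:R * Krav N p n x.
Proof.
move=> le_nN; rewrite (Lop_ext _ (Krav_sum n)) Lop_sum Krav_sum.
pose u k := if k is k'.+1 then p * k%:R * (N%:R - k'%:R) * kcoef n k * poch (- x) k' else 0.
have term (k : 'I_n.+1) : kcoef n k * Lop (fun t => poch (- t) k) x =
    - n%:R * (kcoef n k * poch (- x) k) + (u k.+1 - u k).
  case: k => [[|k] lt_kn] /=.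
    rewrite /Lop !poch0 /u -(kcoef_step (leq0n n) le_nN); ring.
  by rewrite Lop_poch /u -(@kcoef_step n k.+1 lt_kn le_nN); ring.
rewrite (eq_bigr _ (fun k _ => term k)) big_split /= -mulr_sumr.
rewrite -(big_mkord xpredT (fun k => u k.+1 - u k)) telescope_sumr //.
by rewrite /u -(kcoef_step (leqnn n) le_nN) subrr !mul0r subr0 addr0.
Qed.

Lemma wbin_pos x : (x <= N)%N -> 0 < wbin N p x.
Proof.
by move=> le_xN; rewrite /wbin !mulr_gt0 ?exprn_gt0 ?subr_gt0 // ltr0n bin_gt0.
Qed.

Lemma wbin_step x : (x < N)%N ->
  wbin N p x * p * (N%:R - x%:R) = wbin N p x.+1 * x.+1%:R * (1 - p).
Proof.
move=> lt_xN; rewrite /wbin -(subnSK lt_xN) !exprS.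
have binS : (x.+1%:R * 'C(N, x.+1)%:R : R) = (N%:R - x%:R) * 'C(N, x)%:R.
  by rewrite -natrM mul_bin_left natrM natrB // ltnW.
transitivity ((N%:R - x%:R) * 'C(N, x)%:R * p ^+ x * p * (1 - p) ^+ (N - x.+1) * (1 - p)).
  by ring.
by rewrite -binS; ring.
Qed.

(* Summation by parts: the weighted form of L is a negative Dirichlet form. *)
Lemma Lop_by_parts (f g : R -> R) :
  \sum_(x < N.+1) wbin N p x * (Lop f x%:R * g x%:R) =
  - (1 - p) * \sum_(x < N) wbin N p x.+1 * x.+1%:R *
                ((f x.+1%:R - f x%:R) * (g x.+1%:R - g x%:R)).
Proof.
have split (x : 'I_N.+1) : wbin N p x * (Lop f x%:R * g x%:R) =
   wbin N p x * (p * (N%:R - x%:R) * (f (x%:R + 1) - f x%:R) * g x%:R)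
 - wbin N p x * (x%:R * (1 - p) * (f x%:R - f (x%:R - 1)) * g x%:R).
  by rewrite /Lop; ring.
rewrite (eq_bigr _ (fun x _ => split x)) sumrB.
rewrite big_ord_recr /= subrr !(mulr0, mul0r) addr0.
rewrite big_ord_recl /= !mul0r mulr0 add0r -sumrB mulr_sumr.
apply: eq_bigr => x _; rewrite /bump /= add1n natr1.
rewrite (_ : x.+1%:R - 1 = x%:R); last by rewrite -natr1 addrK.
transitivity ((wbin N p x * p * (N%:R - x%:R)) * (f x.+1%:R - f x%:R) * g x%:R
   - wbin N p x.+1 * (x.+1%:R * (1 - p) * (f x.+1%:R - f x%:R) * g x.+1%:R)).
  by ring.
by rewrite wbin_step //; ring.
Qed.

Lemma Lop_selfadjoint (f g : R -> R) :
  \sum_(x < N.+1) wbin N p x * (Lop f x%:R * g x%:R) =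
  \sum_(x < N.+1) wbin N p x * (f x%:R * Lop g x%:R).
Proof.
rewrite [RHS](eq_bigr (fun x : 'I_N.+1 => wbin N p x * (Lop g x%:R * f x%:R))); last first.
  by move=> x _; rewrite [f _ * _]mulrC.
rewrite !Lop_by_parts; congr (_ * _); apply: eq_bigr => x _; ring.
Qed.

(* Eigenfunctions of a self-adjoint operator for distinct eigenvalues are orthogonal. *)
Lemma kravP_ortho m n : (m <= N)%N -> (n <= N)%N -> m != n ->
  ip N (wbin N p) (kravP m) (kravP n) = 0.
Proof.
move=> le_mN le_nN neq_mn; set S := ip N (wbin N p) (kravP m) (kravP n).
have eigen_sum (f g : R -> R) (c : R) :
    (forall x, f x * g x = c * (Krav N p m x * Krav N p n x)) ->
  \sum_(x < N.+1) wbin N p x * (f x%:R * g x%:R) = c * S.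
  move=> fg; rewrite mulr_sumr; apply: eq_bigr => x _.
  by rewrite fg !kravP_horner; ring.
have := Lop_selfadjoint (Krav N p m) (Krav N p n).
rewrite (eigen_sum _ _ (- m%:R)) => [|t]; last by rewrite Krav_eigen //; ring.
rewrite (eigen_sum _ _ (- n%:R)) => [|t]; last by rewrite Krav_eigen //; ring.
move=> /eqP; rewrite -subr_eq0 -mulrBl mulf_eq0 => /orP [|/eqP //].
by rewrite opprK addrC subr_eq0 eqr_nat eq_sym (negbTE neq_mn).
Qed.

Lemma Knorm2E k : Knorm2 N p k = norm2 N (wbin N p) kravP k.
Proof. by apply: eq_bigr => x _; rewrite kravP_horner expr2 mulrC. Qed.

Lemma Knorm2_neq0 k : (k <= N)%N -> Knorm2 N p k != 0.
Proof.
move=> le_kN; rewrite Knorm2E; apply: norm2_neq0 le_kN => [|j le_jN|j le_jN].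
- exact: wbin_pos.
- exact: (size_kravP_monic le_jN).1.
- exact: (size_kravP_monic le_jN).2.
Qed.

Lemma Krav_kernel n x t : (n < N)%N -> x - t != 0 ->
  \sum_(k < n.+1) Krav N p k x / Knorm2 N p k * Krav N p k t =
  (Krav N p n.+1 x * Krav N p n t - Krav N p n x * Krav N p n.+1 t) /
  (Knorm2 N p n * (x - t)).
Proof.
move=> lt_nN xt_neq0; apply: (mulfI xt_neq0).
have := christoffel_darboux wbin_pos (fun j le_jN => (size_kravP_monic le_jN).1)
  (fun j le_jN => (size_kravP_monic le_jN).2) kravP_ortho x t lt_nN.
have -> : \sum_(k < n.+1) (kravP k).[x] * (kravP k).[t] / norm2 N (wbin N p) kravP k =
    \sum_(k < n.+1) Krav N p k x / Knorm2 N p k * Krav N p k t.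
  by apply: eq_bigr => k _; rewrite !kravP_horner Knorm2E mulrAC.
rewrite !kravP_horner -Knorm2E => ->.
by field; rewrite xt_neq0 Knorm2_neq0 // ltnW.
Qed.

Lemma Kker_quotient m j x y : (m < N)%N ->
  (forall i, (i <= j)%N -> x - y != i%:R) ->
  Kker N p m.+1 0 j x y =
  DeltaN j (fun t => (Krav N p m.+1 x / Knorm2 N p m * Krav N p m t
                      + (- Krav N p m x / Knorm2 N p m) * Krav N p m.+1 t) / (x - t)) y.
Proof.
move=> lt_mN xy_nat; rewrite [LHS](_ : _ = DeltaN j (fun t =>
    \sum_(k < m.+1) Krav N p k x / Knorm2 N p k * Krav N p k t) y); last first.
  by rewrite DeltaN_sum; apply: eq_bigr => k _; rewrite mulrAC.
apply: DeltaN_local => i le_ij.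
have xt_neq0 : x - (y + i%:R) != 0 by rewrite opprD addrA subr_eq0 xy_nat.
rewrite Krav_kernel //.
by field; rewrite xt_neq0 Knorm2_neq0 // ltnW.
Qed.

End KravchukPolynomials.

Theorem proposition2p2 (R : realFieldType) (N : nat) (p : R)
  (hp0 : 0 < p) (hp1 : p < 1)
  (n : nat) (hn1 : (1 <= n)%N) (hnN : (n <= N)%N)
  (j : nat) (x y : R)
  (hxy : forall m : nat, (m <= j)%N -> x - y != m%:R) :
  Kker N p n 0 j x y =
    Acoef N p n j x y * Krav N p n x + Bcoef N p n j x y * Krav N p n.-1 x.
Proof.
case: n hn1 hnN => [//|m] _ lt_mN.
rewrite (Kker_quotient hp0 hp1 lt_mN hxy) DeltaN_div // newton_comb.
have norm_neq0 := Knorm2_neq0 hp0 hp1 (ltnW lt_mN).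
have falling_xy_neq0 : falling (x - y) j.+1 != 0.
  by apply: falling_neq0 => k lt_kj; apply: hxy.
rewrite /Acoef /Bcoef -/(newton _ x y j) -/(newton _ x y j) /=.
by field; rewrite falling_xy_neq0 norm_neq0.
Qed.
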